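(* Let $m\ge n$, let $\mathbf{A}\in\mathbb{R}^{m\times n}$ have rank $\rho$, let $k<\rho$ be a positive integer, and let $\mathbf{b}\in\mathbb{R}^m$. Let $\mathbf{U}_k\in\mathbb{R}^{m\times k}$ contain the top $k$ left singular vectors of $\mathbf{A}$, so that $\mathbf{A}_k=\mathbf{U}_k\mathbf{U}_k^{T}\mathbf{A}$, and let $\tilde{\mathbf{U}}_k\in\mathbb{R}^{m\times k}$ be any matrix with orthonormal columns, with $\tilde{\mathbf{A}}_k=\tilde{\mathbf{U}}_k\tilde{\mathbf{U}}_k^{T}\mathbf{A}$. Let $\mathbf{x}_k=\mathbf{A}_k^{+}\mathbf{b}$, $\tilde{\mathbf{x}}_k=\tilde{\mathbf{A}}_k^{+}\mathbf{b}$, and $\Delta=\|\mathbf{A}\tilde{\mathbf{x}}_k-\mathbf{A}\mathbf{x}_k\|_2$. Then $$\Delta\le\frac{2\sigma_1^2(\mathbf{A})}{\sigma_k(\tilde{\mathbf{A}}_k)\,\sigma_k(\mathbf{A})}\,\|\tilde{\mathbf{U}}_k\tilde{\mathbf{U}}_k^{T}-\mathbf{U}_k\mathbf{U}_k^{T}\|_2\,\|\mathbf{b}\|_2,$$ where the right-hand side is interpreted as $+\infty$ if $\sigma_k(\tilde{\mathbf{A}}_k)=0$.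
   Context: $\sigma_i(\mathbf{M})$ denotes the $i$-th largest singular value of $\mathbf{M}$; $\mathbf{M}^{+}$ is the Moore–Penrose pseudoinverse; $\|\cdot\|_2$ is the Euclidean norm for vectors and the spectral norm for matrices. $\mathbf{A}_k$ is the best rank-$k$ approximation of $\mathbf{A}$ obtained from its SVD. *)

From HB Require Import structures.
From mathcomp Require Import all_boot all_order all_algebra.
From mathcomp Require Import boolp classical_sets reals.
Set Implicit Arguments. Unset Strict Implicit. Unset Printing Implicit Defensive.
Import Order.TTheory GRing.Theory Num.Theory.
Local Open Scope ring_scope.
Local Open Scope classical_set_scope.

Section Defs.
Variable R : realType.

Definition vnorm (p : nat) (v : 'cV[R]_p) : R :=
  Num.sqrt (\sum_(i < p) v i 0 ^+ 2).

Definition specnorm (p q : nat) (M : 'M[R]_(p, q)) : R :=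
  sup [set vnorm (M *m v) | v in [set v : 'cV[R]_q | vnorm v <= 1]].

Definition rdiag (p q : nat) (s : nat -> R) : 'M[R]_(p, q) :=
  \matrix_(i < p, j < q) (if (i : nat) == j then s i else 0).

Definition orthogonal_mx (p : nat) (U : 'M[R]_p) : Prop := U^T *m U = 1%:M.

(* A = U * Sigma * V^T is a (full) singular value decomposition of A:
   U, V orthogonal, Sigma = rdiag s with s nonnegative and nonincreasing on
   the min(p,q) diagonal positions. s i is the (i+1)-th largest singular value. *)
Definition is_svd (p q : nat) (A : 'M[R]_(p, q)) (U : 'M[R]_p) (s : nat -> R)
    (V : 'M[R]_q) : Prop :=
  [/\ orthogonal_mx U, orthogonal_mx V,
      (forall i, (i < minn p q)%N -> 0 <= s i),
      (forall i j, (i <= j)%N -> (j < minn p q)%N -> s j <= s i)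
    & A = U *m rdiag p q s *m V^T].

Definition is_pinv (p q : nat) (A : 'M[R]_(p, q)) (X : 'M[R]_(q, p)) : Prop :=
  [/\ A *m X *m A = A, X *m A *m X = X,
      (A *m X)^T = A *m X & (X *m A)^T = X *m A].

(* U_k U_k^T, where U_k = the first k columns of U *)
Definition topk_proj (p : nat) (U : 'M[R]_p) (k : nat) : 'M[R]_p :=
  \sum_(j < p | (j < k)%N) col j U *m (col j U)^T.

End Defs.

From HB Require Import structures.
From mathcomp Require Import all_boot all_order all_algebra.
From mathcomp Require Import boolp classical_sets reals.
From mathcomp Require Import ring lra zify.
Import Order.TTheory GRing.Theory Num.Theory.
Local Open Scope ring_scope.

(* Write P = U_k U_k^T, Q = Ũ_k Ũ_k^T, X = A_k^+ and Y = Ã_k^+. Since A X = P and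
   Y Q = Y, one has the identity
     A Y - A X = A Y (Q - P) (I - P) - A (I - Y Q A) A^T (P - Q) X^T X,
   whose right-hand side consists of projectors, of Q - P, and of factors whose
   norms are at most σ_1(A), 1/σ_k(Ã_k) and 1/σ_k(A). This gives
   Δ <= (σ_1/σ_k(Ã_k) + σ_1^2/σ_k(A)^2) ‖Q - P‖ ‖b‖, and the stated bound
   follows from the interlacing inequality σ_k(Ã_k) <= σ_k(A) for the
   projected matrix Ã_k = Q A. *)

Set Implicit Arguments. Unset Strict Implicit. Unset Printing Implicit Defensive.

Section EuclideanNorm.
Variable R : realType.
Implicit Types p q : nat.

Definition sqnorm p (v : 'cV[R]_p) : R := \sum_(i < p) v i 0 ^+ 2.
Definition dotv p (u v : 'cV[R]_p) : R := \sum_(i < p) u i 0 * v i 0.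

Lemma sqnorm_ge0 p (v : 'cV[R]_p) : 0 <= sqnorm v.
Proof. by apply: sumr_ge0 => i _; apply: sqr_ge0. Qed.

Lemma vnorm_ge0 p (v : 'cV[R]_p) : 0 <= vnorm v.
Proof. exact: sqrtr_ge0. Qed.

Lemma vnorm_sqr p (v : 'cV[R]_p) : vnorm v ^+ 2 = sqnorm v.
Proof. by rewrite /vnorm sqr_sqrtr // sqnorm_ge0. Qed.

Lemma vnorm_le p (v : 'cV[R]_p) (x : R) :
  0 <= x -> sqnorm v <= x ^+ 2 -> vnorm v <= x.
Proof.
move=> x0 h; rewrite -(ger0_norm x0) -sqrtr_sqr /vnorm ler_sqrt //.
exact: sqr_ge0.
Qed.

Lemma vnorm_scale_le p q (u : 'cV[R]_p) (v : 'cV[R]_q) (a b : R) :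
  0 <= a -> 0 <= b -> a ^+ 2 * sqnorm u <= b ^+ 2 * sqnorm v ->
  a * vnorm u <= b * vnorm v.
Proof.
move=> a0 b0 h.
by rewrite -(@ler_pXn2r _ 2) ?nnegrE ?mulr_ge0 ?vnorm_ge0 // !exprMn !vnorm_sqr.
Qed.

Lemma sqnormE p (v : 'cV[R]_p) : sqnorm v = (v^T *m v) 0 0.
Proof. by rewrite /sqnorm mxE; apply: eq_bigr => i _; rewrite mxE expr2. Qed.

Lemma sqnorm_eq0 p (v : 'cV[R]_p) : sqnorm v = 0 -> v = 0.
Proof.
move=> /eqP; rewrite psumr_eq0; last by move=> i _; apply: sqr_ge0.
move=> /allP h; apply/matrixP => i j; rewrite (ord1 j) mxE.
by have := h i (mem_index_enum _); rewrite implyTb sqrf_eq0 => /eqP.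
Qed.

Lemma sqnormD p (u v : 'cV[R]_p) :
  sqnorm (u + v) = sqnorm u + 2 * dotv u v + sqnorm v.
Proof.
rewrite /sqnorm /dotv mulr_sumr -!big_split /=; apply: eq_bigr => i _.
rewrite mxE; ring.
Qed.

Lemma sqnormZ p (c : R) (v : 'cV[R]_p) : sqnorm (c *: v) = c ^+ 2 * sqnorm v.
Proof. by rewrite /sqnorm mulr_sumr; apply: eq_bigr => i _; rewrite mxE; ring. Qed.

Lemma vnormN p (v : 'cV[R]_p) : vnorm (- v) = vnorm v.
Proof. by congr Num.sqrt; apply: eq_bigr => i _; rewrite mxE sqrrN. Qed.

Lemma vnormZ p c (v : 'cV[R]_p) : vnorm (c *: v) = `|c| * vnorm v.
Proof. by rewrite /vnorm -!/(sqnorm _) sqnormZ sqrtrM ?sqrtr_sqr // sqr_ge0. Qed.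

Lemma vnorm0 p : vnorm (0 : 'cV[R]_p) = 0.
Proof. by rewrite /vnorm big1 ?sqrtr0 // => i _; rewrite mxE expr0n. Qed.

Lemma dotvZl p c (u v : 'cV[R]_p) : dotv (c *: u) v = c * dotv u v.
Proof. by rewrite /dotv mulr_sumr; apply: eq_bigr => i _; rewrite mxE; ring. Qed.

Lemma dotvZr p c (u v : 'cV[R]_p) : dotv u (c *: v) = c * dotv u v.
Proof. by rewrite /dotv mulr_sumr; apply: eq_bigr => i _; rewrite mxE; ring. Qed.

Lemma dotv_le p (u v : 'cV[R]_p) : dotv u v <= vnorm u * vnorm v.
Proof.
have [->|u0] := eqVneq u 0.
  by rewrite /dotv big1 ?vnorm0 ?mul0r // => i _; rewrite mxE mul0r.
have [->|v0] := eqVneq v 0.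
  by rewrite /dotv big1 ?vnorm0 ?mulr0 // => i _; rewrite mxE mulr0.
set a := vnorm u; set b := vnorm v.
have a0 : 0 < a.
  rewrite lt0r vnorm_ge0 andbT; apply: contra u0 => /eqP a0.
  by apply/eqP/sqnorm_eq0; rewrite -vnorm_sqr -/a a0 expr0n.
have b0 : 0 < b.
  rewrite lt0r vnorm_ge0 andbT; apply: contra v0 => /eqP b0.
  by apply/eqP/sqnorm_eq0; rewrite -vnorm_sqr -/b b0 expr0n.
(* expand [0 <= |b u - a v|^2] *)
have := sqnorm_ge0 (b *: u + (- a) *: v).
rewrite sqnormD !sqnormZ dotvZl dotvZr -!vnorm_sqr -/a -/b.
move: (dotv u v) => z h.
have : 0 <= a * b * (2 * (a * b - z)) by nra.
by rewrite pmulr_rge0 ?mulr_gt0 // pmulr_rge0 // subr_ge0.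
Qed.

Lemma vnormD p (u v : 'cV[R]_p) : vnorm (u + v) <= vnorm u + vnorm v.
Proof.
apply: vnorm_le; first by rewrite addr_ge0 ?vnorm_ge0.
by rewrite sqnormD -!vnorm_sqr; have := dotv_le u v; nra.
Qed.

Lemma vnormB p (u v : 'cV[R]_p) : vnorm (u - v) <= vnorm u + vnorm v.
Proof. by rewrite -(vnormN v); apply: vnormD. Qed.

Lemma sqnorm_mulmx p q (M : 'M[R]_(p, q)) (v : 'cV[R]_q) :
  sqnorm (M *m v) = (v^T *m (M^T *m M) *m v) 0 0.
Proof. by rewrite sqnormE trmx_mul !mulmxA. Qed.

Lemma sqnorm_orthogonal p q (U : 'M[R]_(p, q)) (v : 'cV[R]_q) :
  U^T *m U = 1%:M -> sqnorm (U *m v) = sqnorm v.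
Proof. by move=> h; rewrite sqnorm_mulmx h mulmx1 sqnormE. Qed.

Lemma vnorm_orthogonal p q (U : 'M[R]_(p, q)) (v : 'cV[R]_q) :
  U^T *m U = 1%:M -> vnorm (U *m v) = vnorm v.
Proof. by move=> h; rewrite /vnorm -!/(sqnorm _) sqnorm_orthogonal. Qed.

Lemma proj_trmx p (P : 'M[R]_p) : P^T *m P = P -> P^T = P.
Proof. by move=> hP; rewrite -hP trmx_mul trmxK. Qed.

Lemma proj_idem p (P : 'M[R]_p) : P^T *m P = P -> P *m P = P.
Proof. by move=> hP; rewrite -{1}(proj_trmx hP). Qed.

Lemma proj_compl p (P : 'M[R]_p) :
  P^T *m P = P -> (1%:M - P)^T *m (1%:M - P) = 1%:M - P.
Proof.
move=> hP; have -> : (1%:M - P)^T = 1%:M - P.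
  by rewrite linearB /= trmx1 (proj_trmx hP).
by rewrite mulmxBl !mulmxBr !mul1mx mulmx1 (proj_idem hP) subrr subr0.
Qed.

Lemma sqnorm_proj_le p (P : 'M[R]_p) (v : 'cV[R]_p) :
  P^T *m P = P -> sqnorm (P *m v) <= sqnorm v.
Proof.
move=> hP.
have -> : sqnorm v = sqnorm (P *m v) + sqnorm ((1%:M - P) *m v).
  have subE (a b : 'M[R]_1) : (a - b) 0 0 = a 0 0 - b 0 0 by rewrite !mxE.
  rewrite !sqnorm_mulmx hP proj_compl // sqnormE mulmxBr mulmx1 mulmxBl subE.
  by rewrite addrC subrK.
by rewrite lerDl sqnorm_ge0.
Qed.

Lemma vnorm_proj_le p (P : 'M[R]_p) (v : 'cV[R]_p) :
  P^T *m P = P -> vnorm (P *m v) <= vnorm v.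
Proof.
move=> hP; rewrite -[X in X <= _]mul1r -[X in _ <= X]mul1r.
by apply: vnorm_scale_le; rewrite ?ler01 // expr1n !mul1r sqnorm_proj_le.
Qed.

End EuclideanNorm.

Section SpectralNorm.
Local Open Scope classical_set_scope.
Variable R : realType.

Lemma abs_entry_le_vnorm p (v : 'cV[R]_p) (j : 'I_p) : `|v j 0| <= vnorm v.
Proof.
rewrite -sqrtr_sqr /vnorm ler_sqrt ?sqnorm_ge0 //.
by rewrite (bigD1 j) //= lerDl; apply: sumr_ge0 => i _; apply: sqr_ge0.
Qed.

Lemma sum_sqr_le p (a : 'I_p -> R) : (forall i, 0 <= a i) ->
  \sum_i a i ^+ 2 <= (\sum_i a i) ^+ 2.
Proof.
move=> h; rewrite expr2 mulr_sumr; apply: ler_sum => i _.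
rewrite expr2; apply: ler_wpM2r => //; rewrite (bigD1 i) //= lerDl.
exact: sumr_ge0.
Qed.

(* An explicit bound showing that the supremum defining [specnorm] is finite. *)
Lemma vnorm_mulmx_le_sum_abs p q (M : 'M[R]_(p, q)) (v : 'cV[R]_q) :
  vnorm v <= 1 -> vnorm (M *m v) <= \sum_i \sum_j `|M i j|.
Proof.
move=> hv; apply: vnorm_le; first by do 2 (apply: sumr_ge0 => ? _).
apply: (@le_trans _ _ (\sum_i (\sum_j `|M i j|) ^+ 2)); last first.
  by apply: sum_sqr_le => i; apply: sumr_ge0.
apply: ler_sum => i _.
have h : `|(M *m v) i 0| <= \sum_j `|M i j|.
  rewrite mxE; apply: (le_trans (ler_norm_sum _ _ _)); apply: ler_sum => j _.
  by rewrite normrM ler_piMr // (le_trans (abs_entry_le_vnorm _ _) hv).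
by rewrite -real_normK ?num_real // ler_pXn2r ?nnegrE ?sumr_ge0.
Qed.

Lemma vnorm_mulmx_le_specnorm p q (M : 'M[R]_(p, q)) (v : 'cV[R]_q) :
  vnorm v <= 1 -> vnorm (M *m v) <= specnorm M.
Proof.
move=> hv; apply: ub_le_sup; last by exists v.
by exists (\sum_i \sum_j `|M i j|) => x [w hw <-]; apply: vnorm_mulmx_le_sum_abs.
Qed.

Lemma specnorm_ge0 p q (M : 'M[R]_(p, q)) : 0 <= specnorm M.
Proof.
have := vnorm_mulmx_le_specnorm M (v := 0).
by rewrite mulmx0 !vnorm0; apply; apply: ler01.
Qed.

Lemma vnorm_mulmx_specnorm p q (M : 'M[R]_(p, q)) (v : 'cV[R]_q) :
  vnorm (M *m v) <= specnorm M * vnorm v.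
Proof.
have [->|v0] := eqVneq v 0; first by rewrite mulmx0 !vnorm0 mulr0.
have c0 : 0 < vnorm v.
  rewrite lt0r vnorm_ge0 andbT; apply: contra v0 => /eqP c0.
  by apply/eqP/sqnorm_eq0; rewrite -vnorm_sqr c0 expr0n.
have := vnorm_mulmx_le_specnorm M (v := (vnorm v)^-1 *: v).
rewrite -scalemxAr !vnormZ ger0_norm ?invr_ge0 ?vnorm_ge0 // mulVf ?gt_eqF //.
move=> /(_ (lexx _)); rewrite -(ler_pM2l c0) mulrA mulfV ?gt_eqF // mul1r.
by rewrite mulrC.
Qed.

End SpectralNorm.

Section RectangularDiagonal.
Variable R : realType.
Implicit Types (p q r : nat) (d e : nat -> R).

Lemma sum_if_eq q (i : nat) (c : R) :
  \sum_(j < q) (if i == j :> nat then c else 0) = if (i < q)%N then c else 0.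
Proof.
case: ltnP => iq.
  rewrite (bigD1 (Ordinal iq)) //= eqxx big1 ?addr0 // => j /negbTE hj.
  by case: eqP => // e; move: hj; rewrite -(inj_eq val_inj) /= -e eqxx.
by rewrite big1 // => j _; case: eqP => // e; move: (ltn_ord j); rewrite -e ltnNge iq.
Qed.

Lemma sqr_sum_if_eq q (i : nat) (F : 'I_q -> R) :
  (\sum_(j < q) (if i == j :> nat then F j else 0)) ^+ 2
  = \sum_(j < q) (if i == j :> nat then F j ^+ 2 else 0).
Proof.
case: (ltnP i q) => iq; last first.
  by rewrite !big1 ?expr0n // => j _; case: eqP => // e;
     move: (ltn_ord j); rewrite -e ltnNge iq.
have other (G : 'I_q -> R) :
    \sum_(j < q | j != Ordinal iq) (if i == j :> nat then G j else 0) = 0.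
  apply: big1 => j /negbTE hj; case: eqP => // e.
  by move: hj; rewrite -(inj_eq val_inj) /= -e eqxx.
rewrite (bigD1 (Ordinal iq)) //= eqxx other addr0.
by rewrite (bigD1 (Ordinal iq)) //= eqxx other addr0.
Qed.

Lemma rdiag_mulmxE p q d (w : 'cV[R]_q) (i : 'I_p) :
  (rdiag p q d *m w) i 0 = d i * \sum_(j < q) (if i == j :> nat then w j 0 else 0).
Proof.
rewrite mxE mulr_sumr; apply: eq_bigr => j _; rewrite mxE.
by case: eqP => _; rewrite ?mulr0 ?mul0r.
Qed.

Lemma rdiag_sq_mulmxE p d (w : 'cV[R]_p) (j : 'I_p) :
  (rdiag p p d *m w) j 0 = d j * w j 0.
Proof.
rewrite mxE (bigD1 j) //= mxE eqxx big1 ?addr0 // => l /negbTE hl.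
rewrite mxE; case: eqP => [jl|]; rewrite ?mul0r //.
by move: hl; rewrite -(inj_eq val_inj) /= jl eqxx.
Qed.

Lemma sqnorm_rdiag_mulmx p q d (w : 'cV[R]_q) :
  sqnorm (rdiag p q d *m w) = \sum_(j < q | (j < p)%N) (d j * w j 0) ^+ 2.
Proof.
rewrite /sqnorm.
transitivity (\sum_(i < p) \sum_(j < q)
    (if i == j :> nat then (d j * w j 0) ^+ 2 else 0)).
  apply: eq_bigr => i _; rewrite rdiag_mulmxE mulr_sumr -sqr_sum_if_eq.
  by congr (_ ^+ 2); apply: eq_bigr => j _; case: eqP => [->|]; rewrite ?mulr0.
rewrite exchange_big /= [RHS]big_mkcond; apply: eq_bigr => j _.
by under eq_bigr do rewrite eq_sym; rewrite sum_if_eq.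
Qed.

Lemma trmx_rdiag p q d : (rdiag p q d)^T = rdiag q p d.
Proof. by apply/matrixP => i j; rewrite !mxE eq_sym; case: eqP => // ->. Qed.

Lemma eq_rdiag p q d e :
  (forall i, (i < minn p q)%N -> d i = e i) -> rdiag p q d = rdiag p q e.
Proof.
move=> h; apply/matrixP => a b; rewrite !mxE; case: eqP => // ab.
by rewrite h // leq_min ltn_ord ab ltn_ord.
Qed.

Lemma pid_mx_rdiag p q r :
  pid_mx r = rdiag p q (fun i => if (i < r)%N then 1 else 0) :> 'M[R]_(p, q).
Proof. by apply/matrixP => a b; rewrite !mxE; case: eqP => _; case: ltnP. Qed.

Lemma rdiag_mull p q d e :
  rdiag p p e *m rdiag p q d = rdiag p q (fun i => e i * d i).
Proof.
apply/matrixP => a j; rewrite !mxE (bigD1 a) //= !mxE eqxx big1 ?addr0.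
  by case: eqP; rewrite ?mulr0.
move=> l /negbTE hl; rewrite !mxE; case: eqP; rewrite ?mul0r // => al.
by move: hl; rewrite -(inj_eq val_inj) /= al eqxx.
Qed.

Lemma rdiag_mulr p q d e :
  rdiag p q d *m rdiag q q e = rdiag p q (fun i => d i * e i).
Proof.
apply: trmx_inj; rewrite trmx_mul !trmx_rdiag rdiag_mull.
by congr rdiag; apply/funext => i; rewrite mulrC.
Qed.

Lemma rdiag_mul p q d e :
  rdiag p q d *m rdiag q p e =
  rdiag p p (fun i => if (i < q)%N then d i * e i else 0).
Proof.
apply/matrixP => a b; rewrite !mxE.
under eq_bigr => l _ do rewrite !mxE.
transitivity (\sum_(l < q)
    (if a == l :> nat then (if a == b :> nat then d a * e a else 0) else 0)).
  apply: eq_bigr => l _; case: (a =P l :> nat) => [al|]; rewrite ?mul0r //.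
  by rewrite -al; case: (a =P b :> nat); rewrite ?mulr0.
by rewrite sum_if_eq; case: eqP; case: ltnP.
Qed.

Lemma rdiag_mul_eq0 p q r d e : (forall i, d i * e i = 0) ->
  rdiag p q d *m rdiag q r e = 0.
Proof.
move=> h; apply/matrixP => a b; rewrite !mxE big1 // => l _; rewrite !mxE.
case: eqP => [al|]; rewrite ?mul0r //; case: eqP => [lb|]; rewrite ?mulr0 //.
by rewrite al h.
Qed.

Lemma addmx_rdiag p q d e :
  rdiag p q d + rdiag p q e = rdiag p q (fun i => d i + e i).
Proof. by apply/matrixP => a b; rewrite !mxE; case: eqP; rewrite ?addr0. Qed.

Lemma oppmx_rdiag p q d : - rdiag p q d = rdiag p q (fun i => - d i).
Proof. by apply/matrixP => a b; rewrite !mxE; case: eqP; rewrite ?oppr0. Qed.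

Lemma mxrank_rdiag_le p q r d : (r <= q)%N ->
  (forall i, (r <= i)%N -> (i < minn p q)%N -> d i = 0) ->
  (\rank (rdiag p q d) <= r)%N.
Proof.
move=> rq h.
have -> : rdiag p q d = rdiag p q d *m pid_mx r.
  rewrite pid_mx_rdiag rdiag_mulr; apply: eq_rdiag => i hi.
  by case: ltnP => ir; rewrite ?mulr1 ?mulr0 // h.
by apply: leq_trans (mxrankM_maxr _ _) _; rewrite rank_pid_mx.
Qed.

Lemma mxrank_rdiag_ge p q r d : (r <= p)%N -> (r <= q)%N ->
  (forall i, (i < r)%N -> d i != 0) -> (r <= \rank (rdiag p q d))%N.
Proof.
move=> rp rq h.
have e : rdiag p q d *m rdiag q q (fun i => if (i < r)%N then (d i)^-1 else 0)
         = pid_mx r.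
  rewrite rdiag_mulr pid_mx_rdiag; apply: eq_rdiag => i hi.
  by case: ltnP => ir; rewrite ?mulr0 // mulfV // h.
by rewrite -[X in (X <= _)%N](rank_pid_mx (m:=p) (n:=q) R) // -e mxrankM_maxl.
Qed.

End RectangularDiagonal.

Section SingularValueDecomposition.
Variable R : realType.
Implicit Types (p q : nat) (d : nat -> R).

Lemma orthogonal_mx_trmx p (V : 'M[R]_p) : orthogonal_mx V -> orthogonal_mx V^T.
Proof. by rewrite /orthogonal_mx trmxK; apply: mulmx1C. Qed.

Lemma svd_trmx p q (M : 'M[R]_(p, q)) U d V :
  is_svd M U d V -> is_svd M^T V d U.
Proof.
case=> hU hV d0 dle ->; split=> //; try by rewrite minnC.
by rewrite !trmx_mul trmxK trmx_rdiag mulmxA.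
Qed.

Lemma pinv_trmx p q (M : 'M[R]_(p, q)) Z : is_pinv M Z -> is_pinv M^T Z^T.
Proof.
case=> h1 h2 h3 h4; split; rewrite -?trmx_mul ?h3 ?h4 //.
- by rewrite mulmxA h1.
- by rewrite mulmxA h2.
Qed.

Lemma mxrank_svd p q (M : 'M[R]_(p, q)) U d V :
  is_svd M U d V -> \rank M = \rank (rdiag p q d).
Proof.
case=> hU hV _ _ hM; apply/eqP; rewrite eqn_leq; apply/andP; split.
  by rewrite hM (leq_trans (mxrankM_maxl _ _)) ?mxrankM_maxr.
have -> : rdiag p q d = U^T *m M *m V.
  by rewrite hM !mulmxA hU mul1mx -mulmxA hV mulmx1.
by rewrite (leq_trans (mxrankM_maxl _ _)) ?mxrankM_maxr.
Qed.

Lemma svd_sv_gt0 p q (M : 'M[R]_(p, q)) U d V i :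
  is_svd M U d V -> (i < \rank M)%N -> 0 < d i.
Proof.
move=> svdM; have [_ _ d0 dle _] := svdM; move=> hi.
have im : (i < minn p q)%N.
  by apply: leq_trans hi _; rewrite leq_min rank_leq_row rank_leq_col.
rewrite lt0r d0 // andbT; apply/eqP => di0; move: hi.
rewrite (mxrank_svd svdM) ltnNge mxrank_rdiag_le //.
  by move: im; rewrite leq_min => /andP[_ /ltnW].
move=> j ij jm; apply/eqP; rewrite eq_le d0 // andbT -di0; exact: dle.
Qed.

Lemma svd_sv_eq0 p q (M : 'M[R]_(p, q)) U d V i :
  is_svd M U d V -> (\rank M <= i)%N -> (i < minn p q)%N -> d i = 0.
Proof.
move=> svdM; have [_ _ d0 dle _] := svdM; move=> ri im.
apply/eqP; rewrite eq_le d0 // andbT leNgt; apply/negP => di_gt0.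
have : (i.+1 <= \rank (rdiag p q d))%N.
  have := im; rewrite leq_min => /andP[ip iq].
  apply: mxrank_rdiag_ge => // j ji.
  by rewrite gt_eqF // (lt_le_trans di_gt0) // dle.
by rewrite -(mxrank_svd svdM); lia.
Qed.

Lemma sqnorm_rdiag_mulmx_le p q d (w : 'cV[R]_q) c :
  (forall i, (i < minn p q)%N -> d i ^+ 2 <= c ^+ 2) ->
  sqnorm (rdiag p q d *m w) <= c ^+ 2 * sqnorm w.
Proof.
move=> h; rewrite sqnorm_rdiag_mulmx /sqnorm mulr_sumr big_mkcond /=.
apply: ler_sum => j _; case: ifP => jp; last by rewrite mulr_ge0 ?sqr_ge0.
by rewrite exprMn ler_wpM2r ?sqr_ge0 // h // leq_min jp ltn_ord.
Qed.

Lemma vnorm_svd_mulmx_le p q (M : 'M[R]_(p, q)) U d V :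
  is_svd M U d V -> (0 < minn p q)%N ->
  forall w, vnorm (M *m w) <= d 0%N * vnorm w.
Proof.
case=> hU hV d0 dle -> pq0 w.
rewrite -!mulmxA vnorm_orthogonal // -(vnorm_orthogonal w (orthogonal_mx_trmx hV)).
rewrite -[X in X <= _]mul1r; apply: vnorm_scale_le; rewrite ?ler01 ?d0 //.
rewrite expr1n mul1r; apply: sqnorm_rdiag_mulmx_le => i im.
by rewrite ler_pXn2r ?nnegrE ?d0 ?dle.
Qed.

Lemma vnorm_pinv_svd_le p q (M : 'M[R]_(p, q)) U d V Z r :
  is_svd M U d V -> is_pinv M Z -> (0 < r)%N -> (r <= minn p q)%N ->
  0 < d r.-1 -> (forall i, (r <= i)%N -> (i < minn p q)%N -> d i = 0) ->
  forall w, vnorm (Z *m w) <= (d r.-1)^-1 * vnorm w.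
Proof.
move=> [hU hV d0 dle hM] [P1 P2 P3 P4] r0 rpq dr0 dr w.
rewrite -(ler_pM2l dr0) mulrA mulfV ?gt_eqF // mul1r.
set c := d r.-1.
have hd i : (i < minn p q)%N -> d i = 0 \/ c <= d i.
  by case: (ltnP i r) => [ir im|ri im]; [right; apply: dle; lia | left; apply: dr].
set u := Z *m w.
have MPu : M^T *m (Z^T *m u) = u by rewrite mulmxA -trmx_mul P4 /u !mulmxA P2.
set y := V^T *m u.
have nu : vnorm u = vnorm y.
  by rewrite /y vnorm_orthogonal //; apply: orthogonal_mx_trmx.
(* [u] lies in the row space of [M], where [M] stretches by at least [c] *)
have hy : y = rdiag q p d *m (U^T *m (Z^T *m u)).
  rewrite /y -{1}MPu; have -> : M^T = V *m rdiag q p d *m U^T.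
    by rewrite hM !trmx_mul trmxK trmx_rdiag mulmxA.
  by rewrite -!mulmxA (mulmxA V^T) hV mul1mx.
have y_out (j : 'I_q) : (p <= j)%N -> y j 0 = 0.
  move=> pj; rewrite hy rdiag_mulmxE big1 ?mulr0 // => l _; case: eqP => // jl.
  by move: (ltn_ord l); rewrite -jl ltnNge pj.
have key : c ^+ 2 * sqnorm y <= sqnorm (M *m u).
  rewrite hM -!mulmxA sqnorm_orthogonal // -/y sqnorm_rdiag_mulmx /sqnorm mulr_sumr.
  rewrite [X in _ <= X]big_mkcond /=; apply: ler_sum => j _; case: ifP => jp; last first.
    by rewrite y_out ?expr0n ?mulr0 // leqNgt jp.
  have [dj0|cdj] := hd j ltac:(by rewrite leq_min jp ltn_ord).
    by rewrite hy rdiag_mulmxE dj0 !mul0r expr0n mulr0.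
  rewrite exprMn ler_wpM2r ?sqr_ge0 // ler_pXn2r ?nnegrE ?(ltW dr0) //.
  exact: le_trans (ltW dr0) cdj.
have MZproj : (M *m Z)^T *m (M *m Z) = M *m Z by rewrite P3 mulmxA P1.
apply: le_trans (_ : vnorm (M *m u) <= vnorm w); last by rewrite /u mulmxA vnorm_proj_le.
rewrite nu -[X in _ <= X]mul1r; apply: vnorm_scale_le; rewrite ?ler01 ?(ltW dr0) //.
by rewrite expr1n mul1r.
Qed.

End SingularValueDecomposition.

Section Interlacing.
Variable R : realType.

Lemma exists_nonzero_row p q (C : 'M[R]_(p, q)) : C != 0 -> exists i, row i C != 0.
Proof.
move=> C0; case: (pickP (fun i => row i C != 0)) => [i hi | h]; first by exists i.
move/eqP: C0; case; apply/row_matrixP => i; rewrite row0.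
by apply/eqP; move: (h i) => /negbFE.
Qed.

Lemma exists_kernel_vector_pid n k (N : 'M[R]_n) :
  (k <= n)%N -> (\rank N < k)%N ->
  exists2 c : 'cV[R]_n, c != 0 & pid_mx k *m c = c /\ N *m c = 0.
Proof.
move=> kn rN.
set S1 := kermx N^T; set S2 := pid_mx k : 'M[R]_n.
have /exists_nonzero_row [i ri] : (S1 :&: S2)%MS != 0.
  rewrite -mxrank_eq0; apply/eqP => cap0.
  have := mxrank_sum_cap S1 S2; have := rank_leq_col (S1 + S2)%MS.
  by rewrite cap0 mxrank_ker mxrank_tr rank_pid_mx //; lia.
set r := row i _ in ri.
have /sub_kermxP rN0 : (r <= S1)%MS by apply: submx_trans (row_sub _ _) (capmxSl _ _).
have /submxP [D rD] : (r <= S2)%MS by apply: submx_trans (row_sub _ _) (capmxSr _ _).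
exists r^T; first by apply: contra ri => /eqP /(congr1 trmx); rewrite trmxK trmx0 => ->.
split; last by rewrite -(trmxK N) -trmx_mul rN0 trmx0.
by rewrite rD trmx_mul tr_pid_mx mulmxA pid_mx_id.
Qed.

Lemma pid_mx_mulmxE n k (c : 'cV[R]_n) (j : 'I_n) :
  (pid_mx k *m c) j 0 = if (j < k)%N then c j 0 else 0.
Proof. by rewrite pid_mx_rdiag rdiag_sq_mulmxE; case: ifP; rewrite ?mul1r ?mul0r. Qed.

(* Courant-Fischer: a nonzero vector in the span of the first k right singular
   vectors of [Q A] that is orthogonal to the first k-1 right singular vectors
   of [A] is stretched by at least [sa k.-1] and at most [s k.-1]. *)
Lemma svd_proj_sv_le m n k (A : 'M[R]_(m, n)) U s V (Q : 'M[R]_m) Ua sa Va :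
  (n <= m)%N -> (0 < k)%N -> (k <= n)%N -> Q^T *m Q = Q ->
  is_svd A U s V -> is_svd (Q *m A) Ua sa Va -> sa k.-1 <= s k.-1.
Proof.
move=> nm k0 kn hQ [hU hV s0 sle hA] [hUa hVa sa0 sale hB].
have mn : minn m n = n by apply/minn_idPr.
rewrite mn in s0 sle sa0 sale.
have [c c0 [ck Nc]] := @exists_kernel_vector_pid n k (pid_mx k.-1 *m V^T *m Va) kn
  ltac:(rewrite -!mulmxA; apply: leq_ltn_trans (mxrankM_maxl _ _) _;
        rewrite rank_pid_mx //; lia).
have c_out (j : 'I_n) : (k <= j)%N -> c j 0 = 0.
  by move=> kj; rewrite -ck pid_mx_mulmxE ltnNge kj.
set w := V^T *m (Va *m c).
have w_in (j : 'I_n) : (j < k.-1)%N -> w j 0 = 0.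
  move=> jk; have : (pid_mx k.-1 *m w) j 0 = 0 by rewrite /w !mulmxA Nc mxE.
  by rewrite pid_mx_mulmxE jk.
have lower : sa k.-1 ^+ 2 * sqnorm c <= sqnorm (Q *m A *m (Va *m c)).
  rewrite hB -!mulmxA (mulmxA Va^T) hVa mul1mx sqnorm_orthogonal //.
  rewrite sqnorm_rdiag_mulmx /sqnorm mulr_sumr [X in _ <= X]big_mkcond /=.
  apply: ler_sum => l _; rewrite (leq_trans (ltn_ord l) nm).
  have [lk|kl] := ltnP l k; last by rewrite c_out // !mulr0 expr0n /= mulr0.
  rewrite exprMn ler_wpM2r ?sqr_ge0 // ler_pXn2r ?nnegrE ?sa0 ?sale //; lia.
have upper : sqnorm (A *m (Va *m c)) <= s k.-1 ^+ 2 * sqnorm c.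
  have VTVa : (V^T *m Va)^T *m (V^T *m Va) = 1%:M.
    by rewrite trmx_mul trmxK mulmxA -(mulmxA _ V) (mulmx1C hV) mulmx1.
  rewrite -(sqnorm_orthogonal c VTVa) mulmxA -/w hA -!mulmxA sqnorm_orthogonal //.
  rewrite sqnorm_rdiag_mulmx /sqnorm mulr_sumr [X in X <= _]big_mkcond /=.
  apply: ler_sum => l _; case: ifP => _; last by rewrite mulr_ge0 ?sqr_ge0.
  have [lk|kl] := ltnP l k.-1; first by rewrite w_in // mulr0 expr0n mulr0.
  have sl_ge0 := s0 l (ltn_ord l); have sl_le := sle _ _ kl (ltn_ord l).
  by rewrite exprMn ler_wpM2r ?sqr_ge0 // ler_pXn2r ?nnegrE // (le_trans sl_ge0).
have proj : sqnorm (Q *m A *m (Va *m c)) <= sqnorm (A *m (Va *m c)).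
  by rewrite -mulmxA sqnorm_proj_le.
have c_gt0 : 0 < sqnorm c.
  by rewrite lt0r sqnorm_ge0 andbT; apply: contra c0 => /eqP /sqnorm_eq0 ->.
rewrite -(@ler_pXn2r _ 2) ?nnegrE ?sa0 ?s0 //; try lia.
by rewrite -(ler_pM2r c_gt0) (le_trans lower (le_trans proj upper)).
Qed.

End Interlacing.

Section PseudoinverseOfProjection.
Variable R : realType.

Lemma mulmx_pinv_proj m n (A : 'M[R]_(m, n)) (P : 'M[R]_m) X Z :
  P^T *m P = P -> is_pinv (P *m A) X ->
  (1%:M - P) *m A *m A^T *m P = 0 -> P *m A *m Z = P -> A *m X = P.
Proof.
move=> hP [X1 X2 X3 X4] compl0 PAZ.
have PT := proj_trmx hP; have PP := proj_idem hP.
have XE : X = A^T *m P *m X^T *m X by rewrite -{1}X2 -X4 !trmx_mul PT.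
(* [P A X] is the orthogonal projector onto the range of [P A], that is of [P] *)
have PAXP : P *m A *m X *m P = P.
  by rewrite -{2}PAZ !mulmxA -(mulmxA (P *m A *m X) P A) X1 PAZ.
have PAX : P *m A *m X = P.
  have PPAX : P *m (P *m A *m X) = P *m A *m X by rewrite !mulmxA PP.
  by rewrite -X3 -PPAX trmx_mul X3 PT PAXP.
have -> : A *m X = P *m A *m X + (1%:M - P) *m A *m X.
  by rewrite -!mulmxDl addrC subrK mul1mx.
by rewrite PAX {1}XE !mulmxA compl0 !mul0mx addr0.
Qed.

Lemma topk_projE m (U : 'M[R]_m) k : topk_proj U k = U *m pid_mx k *m U^T.
Proof.
apply/matrixP => a b; rewrite /topk_proj summxE [RHS]mxE big_mkcond /=.
apply: eq_bigr => j _; rewrite !mxE big_ord1 !mxE.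
rewrite (bigD1 j) //= big1 ?addr0 => [|l /negbTE lj]; last first.
  by rewrite mxE val_eqE lj mulr0.
by rewrite mxE eqxx /=; case: ltnP; rewrite ?mulr1 ?mulr0 ?mul0r.
Qed.

Lemma topk_proj_is_proj m (U : 'M[R]_m) k :
  orthogonal_mx U -> (topk_proj U k)^T *m topk_proj U k = topk_proj U k.
Proof.
move=> hU; rewrite topk_projE !trmx_mul trmxK tr_pid_mx -!mulmxA (mulmxA U^T) hU.
by rewrite mul1mx (mulmxA (pid_mx k)) mul_pid_mx minnn pid_mx_minv.
Qed.

Lemma is_svd_topk m n (A : 'M[R]_(m, n)) U s V k :
  is_svd A U s V ->
  is_svd (topk_proj U k *m A) U (fun i => if (i < k)%N then s i else 0) V.
Proof.
case=> hU hV s0 sle hA; split=> //.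
- by move=> i im; case: ifP => // _; apply: s0.
- move=> i j ij jm; case: (ltnP j k) => jk; first by rewrite (leq_ltn_trans ij jk) sle.
  by case: ifP => _; rewrite ?s0 //; apply: leq_ltn_trans ij jm.
- rewrite topk_projE hA -!mulmxA (mulmxA U^T) hU mul1mx (mulmxA (pid_mx k)).
  rewrite pid_mx_rdiag rdiag_mull !mulmxA; congr (_ *m rdiag _ _ _ *m _).
  by apply/funext => i; case: ifP; rewrite ?mul1r ?mul0r.
Qed.

Lemma mulmx_pinv_topk m n (A : 'M[R]_(m, n)) U s V k X :
  is_svd A U s V -> (0 < k)%N -> (k <= minn m n)%N -> 0 < s k.-1 ->
  is_pinv (topk_proj U k *m A) X -> A *m X = topk_proj U k.
Proof.
move=> svdA k0 kmn sk0 hX; have [hU hV s0 sle hA] := svdA.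
have [_ _ _ _ PAE] := is_svd_topk k svdA.
pose Z := V *m rdiag n m (fun i => if (i < k)%N then (s i)^-1 else 0) *m U^T.
apply: (mulmx_pinv_proj (Z := Z) (topk_proj_is_proj k hU) hX).
  rewrite -mulmxA.
  have -> : (1%:M - topk_proj U k) *m A =
            U *m rdiag m n (fun i => s i - (if (i < k)%N then s i else 0)) *m V^T.
    rewrite mulmxBl mul1mx PAE {1}hA -mulmxBl -mulmxBr.
    by rewrite oppmx_rdiag addmx_rdiag.
  have -> : A^T *m topk_proj U k =
            V *m rdiag n m (fun i => if (i < k)%N then s i else 0) *m U^T.
    rewrite -{1}(proj_trmx (topk_proj_is_proj k hU)) -trmx_mul PAE.
    by rewrite !trmx_mul trmxK trmx_rdiag mulmxA.
  rewrite -!mulmxA (mulmxA V^T) hV mul1mx (mulmxA (rdiag _ _ _)).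
  by rewrite rdiag_mul_eq0 ?mul0mx ?mulmx0 // => i; case: ifP; rewrite ?subrr ?mul0r ?mulr0.
rewrite /Z PAE -!mulmxA (mulmxA V^T) hV mul1mx (mulmxA (rdiag _ _ _)) rdiag_mul.
rewrite topk_projE pid_mx_rdiag !mulmxA; congr (_ *m _ *m _); apply: eq_rdiag => i _.
case: (ltnP i k) => ik; last by rewrite !mul0r; case: ifP.
rewrite (leq_trans ik (leq_trans kmn (geq_minr _ _))) mulfV // gt_eqF //.
by apply: lt_le_trans sk0 (sle _ _ _ _); lia.
Qed.

Lemma vnorm_pinv_topk_le m n (A : 'M[R]_(m, n)) U s V k X :
  is_svd A U s V -> (0 < k)%N -> (k <= minn m n)%N -> 0 < s k.-1 ->
  is_pinv (topk_proj U k *m A) X ->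
  (forall w, vnorm (X *m w) <= (s k.-1)^-1 * vnorm w) /\
  (forall w, vnorm (X^T *m w) <= (s k.-1)^-1 * vnorm w).
Proof.
move=> svdA k0 kmn sk0 hX; have svdPA := is_svd_topk k svdA.
have kmn' : (k <= minn n m)%N by rewrite minnC.
have bX := vnorm_pinv_svd_le svdPA hX k0 kmn.
have bXT := vnorm_pinv_svd_le (svd_trmx svdPA) (pinv_trmx hX) k0 kmn'.
rewrite /= prednK // leqnn in bX bXT.
by split; [apply: bX | apply: bXT] => // p kp _; rewrite ltnNge kp.
Qed.

End PseudoinverseOfProjection.

Section PseudoinverseDifference.
Variables (R : realType) (m n : nat) (A : 'M[R]_(m, n)) (P Q : 'M[R]_m).
Variables (X Y : 'M[R]_(n, m)).
Hypotheses (hP : P^T *m P = P) (hQ : Q^T *m Q = Q).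
Hypotheses (hX : is_pinv (P *m A) X) (hY : is_pinv (Q *m A) Y) (hAX : A *m X = P).

Lemma pinv_proj_mulmxK : Y *m Q = Y.
Proof.
have [_ Y2 Y3 _] := hY; have QT := proj_trmx hQ.
have YE : Y = Y *m Y^T *m A^T *m Q by rewrite -{1}Y2 -mulmxA -Y3 !trmx_mul QT !mulmxA.
by rewrite {1}YE -mulmxA (proj_idem hQ) -YE.
Qed.

Lemma mulmx_pinv_subE :
  A *m Y - A *m X =
  A *m Y *m (Q - P) *m (1%:M - P)
  - A *m (1%:M - Y *m (Q *m A)) *m A^T *m (P - Q) *m X^T *m X.
Proof.
have [Y1 _ _ Y4] := hY; have [_ X2 _ X4] := hX.
have PP := proj_idem hP; have QT := proj_trmx hQ.
have XE : X = A^T *m P *m X^T *m X by rewrite -{1}X2 -X4 !trmx_mul (proj_trmx hP).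
have Y_term : A *m Y *m (Q - P) *m (1%:M - P) = A *m Y - A *m Y *m P.
  rewrite -mulmxA; have -> : (Q - P) *m (1%:M - P) = Q - Q *m P.
    by rewrite mulmxBr mulmx1 mulmxBl PP opprB addrA subrK.
  by rewrite mulmxBr (mulmxA (A *m Y)) -(mulmxA A Y Q) pinv_proj_mulmxK.
(* [I - Y (Q A)] annihilates the range of [(Q A)^T = A^T Q] *)
have kerQ : (1%:M - Y *m (Q *m A)) *m A^T *m Q = 0.
  rewrite -mulmxA; have -> : A^T *m Q = (Q *m A)^T by rewrite trmx_mul QT.
  by rewrite mulmxBl mul1mx -{1}Y4 -trmx_mul (mulmxA (Q *m A)) Y1 subrr.
have X_term : A *m (1%:M - Y *m (Q *m A)) *m A^T *m (P - Q) *m X^T *m X =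
              A *m X - A *m Y *m P.
  transitivity (A *m ((1%:M - Y *m (Q *m A)) *m A^T *m (P - Q)) *m X^T *m X).
    by rewrite !mulmxA.
  rewrite mulmxBr kerQ subr0.
  transitivity (A *m (1%:M - Y *m (Q *m A)) *m X); first by rewrite [in RHS]XE !mulmxA.
  by rewrite mulmxBr mulmx1 mulmxBl -!mulmxA hAX (mulmxA Y Q P) pinv_proj_mulmxK.
by rewrite Y_term X_term opprB addrA subrK.
Qed.

Lemma vnorm_pinv_sub_le (a y x : R) (b : 'cV[R]_m) :
  0 <= a -> 0 <= y -> 0 <= x ->
  (forall w, vnorm (A *m w) <= a * vnorm w) ->
  (forall w, vnorm (A^T *m w) <= a * vnorm w) ->
  (forall w, vnorm (Y *m w) <= y * vnorm w) ->
  (forall w, vnorm (X *m w) <= x * vnorm w) ->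
  (forall w, vnorm (X^T *m w) <= x * vnorm w) ->
  vnorm (A *m (Y *m b) - A *m (X *m b)) <=
  (a * y + a ^+ 2 * x ^+ 2) * specnorm (Q - P) * vnorm b.
Proof.
move=> a0 y0 x0 bA bAT bY bX bXT.
have sn0 := specnorm_ge0 (Q - P).
have compl_proj : (1%:M - Y *m (Q *m A))^T *m (1%:M - Y *m (Q *m A)) =
                  1%:M - Y *m (Q *m A).
  by have [_ Y2 _ Y4] := hY; rewrite proj_compl // Y4 mulmxA Y2.
rewrite !mulmxA -mulmxBl mulmx_pinv_subE mulmxBl.
apply: le_trans (vnormB _ _) _; rewrite !mulrDl; apply: lerD.
  rewrite -!mulmxA -!mulrA.
  apply: le_trans (bA _) _; apply: ler_wpM2l => //.
  apply: le_trans (bY _) _; apply: ler_wpM2l => //.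
  apply: le_trans (vnorm_mulmx_specnorm _ _) _; apply: ler_wpM2l => //.
  exact/vnorm_proj_le/proj_compl.
have -> : a ^+ 2 * x ^+ 2 * specnorm (Q - P) * vnorm b =
          a * (a * (specnorm (Q - P) * (x * (x * vnorm b)))) by ring.
rewrite -!mulmxA; apply: le_trans (bA _) _; apply: ler_wpM2l => //.
apply: le_trans (vnorm_proj_le _ compl_proj) _.
apply: le_trans (bAT _) _; apply: ler_wpM2l => //.
rewrite -opprB mulNmx vnormN.
apply: le_trans (vnorm_mulmx_specnorm _ _) _; apply: ler_wpM2l => //.
apply: le_trans (bXT _) _; apply: ler_wpM2l => //; exact: bX.
Qed.

End PseudoinverseDifference.

Lemma pinv_bound_coef_le (R : realFieldType) (a c d : R) :
  0 < c -> c <= d -> d <= a ->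
  a * c^-1 + a ^+ 2 * d^-1 ^+ 2 <= 2 * a ^+ 2 / (c * d).
Proof.
move=> c0 cd da; have d0 := lt_le_trans c0 cd; have a0 := le_trans (ltW d0) da.
have splitE : a ^+ 2 / (c * d) = a * c^-1 * (a / d) by rewrite invfM; ring.
have c_term : a * c^-1 <= a ^+ 2 / (c * d).
  rewrite splitE; apply: ler_peMr; first by rewrite mulr_ge0 // invr_ge0 ltW.
  by rewrite ler_pdivlMr // mul1r.
have d_term : a ^+ 2 * d^-1 ^+ 2 <= a ^+ 2 / (c * d).
  rewrite invfM expr2; apply: ler_wpM2l; first exact: sqr_ge0.
  apply: ler_wpM2r; first by rewrite invr_ge0 ltW.
  by rewrite lef_pV2 ?posrE.
have -> : 2 * a ^+ 2 / (c * d) = a ^+ 2 / (c * d) + a ^+ 2 / (c * d) by ring.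
exact: lerD.
Qed.

Unset Implicit Arguments.
Set Strict Implicit.

Theorem lemma5 (R : realType) (m n k : nat) (A : 'M[R]_(m, n)) (b : 'cV[R]_m)
    (U : 'M[R]_m) (s : nat -> R) (V : 'M[R]_n)
    (Ut : 'M[R]_(m, k))
    (Ua : 'M[R]_m) (sa : nat -> R) (Va : 'M[R]_n)
    (X Xt : 'M[R]_(n, m)) :
  (n <= m)%N -> (0 < k)%N -> (k < \rank A)%N ->
  is_svd A U s V ->
  Ut^T *m Ut = 1%:M ->
  is_svd (Ut *m Ut^T *m A) Ua sa Va ->
  is_pinv (topk_proj U k *m A) X ->
  is_pinv (Ut *m Ut^T *m A) Xt ->
  let xk := X *m b in
  let xtk := Xt *m b in
  let Delta := vnorm (A *m xtk - A *m xk) in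
  sa k.-1 = 0 \/
  Delta <= (2 * s 0%N ^+ 2) / (sa k.-1 * s k.-1)
             * specnorm (Ut *m Ut^T - topk_proj U k) * vnorm b.
Proof.
move=> nm k0 krk svdA hUt svdB hX hY; cbv zeta.
have [->|sa_neq0] := eqVneq (sa k.-1) 0; [by left | right].
have kn : (k < n)%N := leq_trans krk (rank_leq_col A).
have kmn : (k <= minn m n)%N by rewrite leq_min; apply/andP; split; lia.
have [hU _ s0 sle _] := svdA; have [_ _ sa0 _ _] := svdB.
have hQ : (Ut *m Ut^T)^T *m (Ut *m Ut^T) = Ut *m Ut^T.
  by rewrite trmx_mul trmxK mulmxA -(mulmxA Ut) hUt mulmx1.
have sk_gt0 : 0 < s k.-1 by apply: (svd_sv_gt0 svdA); lia.
have sak_gt0 : 0 < sa k.-1 by rewrite lt0r sa_neq0 sa0 //; lia.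
have sa_le_s : sa k.-1 <= s k.-1 := svd_proj_sv_le nm k0 (ltnW kn) hQ svdA svdB.
have sa_out i : (k <= i)%N -> (i < minn m n)%N -> sa i = 0.
  move=> ki im; apply: (svd_sv_eq0 svdB) => //; apply: leq_trans _ ki.
  by rewrite -mulmxA (leq_trans (mxrankM_maxl _ _)) ?rank_leq_col.
have mn0 : (0 < minn m n)%N by lia.
have bA := vnorm_svd_mulmx_le svdA mn0.
have bAT := vnorm_svd_mulmx_le (svd_trmx svdA) ltac:(by rewrite minnC).
have bY := vnorm_pinv_svd_le svdB hY k0 kmn sak_gt0 sa_out.
have [bX bXT] := vnorm_pinv_topk_le svdA k0 kmn sk_gt0 hX.
have invr_gt0_sa : 0 < (sa k.-1)^-1 by rewrite invr_gt0.
have invr_gt0_s : 0 < (s k.-1)^-1 by rewrite invr_gt0.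
apply: le_trans (vnorm_pinv_sub_le (topk_proj_is_proj k hU) hQ hX hY
  (mulmx_pinv_topk svdA k0 kmn sk_gt0 hX) b (s0 _ mn0)
  (ltW (invr_gt0_sa)) (ltW invr_gt0_s)
  bA bAT bY bX bXT) _.
apply: ler_wpM2r; first exact: vnorm_ge0.
apply: ler_wpM2r; first exact: specnorm_ge0.
apply: pinv_bound_coef_le => //; apply: sle; lia.
Qed.
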